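(* Let $\mathbb K$ be an algebraically closed field of characteristic zero, let $N\geq 1$, and let $f\in\mathbb K[x_0,\ldots,x_N]$ be a homogeneous polynomial of degree $d\geq 2$ without multiple irreducible factors, with associated reduced hypersurface $X=V(f)\subset\mathbb P^N$. Suppose that the hessian determinant $\operatorname{hess}_f=\det\left[\frac{\partial^2 f}{\partial x_i\partial x_j}\right]_{0\leq i,j\leq N}$ is identically zero. Then $$X^*\subsetneq Z_X\subsetneq (\mathbb P^N)^*.$$
   Context: The polar map of $X$ is the rational map $\nabla_f:\mathbb P^N\dashrightarrow(\mathbb P^N)^*$, $p\mapsto\left(\frac{\partial f}{\partial x_0}(p):\cdots:\frac{\partial f}{\partial x_N}(p)\right)$. The polar image is $Z_X=\overline{\nabla_f(\mathbb P^N)}\subseteq(\mathbb P^N)^*$. The dual variety $X^*\subseteq(\mathbb P^N)^*$ is the closure of the image of the Gauss map $X\dashrightarrow(\mathbb P^N)^*$, $p\mapsto [T_pX]$ for smooth points $p$, i.e. $X^*=\overline{\nabla_f(X)}$. *)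

From HB Require Import structures.
From mathcomp Require Import all_boot all_order all_algebra.
From mathcomp Require Import mpoly.
Set Implicit Arguments. Unset Strict Implicit. Unset Printing Implicit Defensive.
Import GRing.Theory.
Local Open Scope ring_scope.

(* Points of K^(N+1) (homogeneous coordinates). A subset of P^N (resp. of the
   dual (P^N)^* ) is represented by the set of its nonzero representative
   vectors (a cone without 0). *)
Definition vec (K : fieldType) (N : nat) := 'I_N.+1 -> K.

Definition nonzero_vec (K : fieldType) (N : nat) (v : vec K N) : Prop :=
  exists i, v i != 0.

(* Zariski closure in P^N of a set S of points: the nonzero vectors on which
   every homogeneous polynomial vanishing on S also vanishes. *)
Definition proj_closure (K : fieldType) (N : nat) (S : vec K N -> Prop)
  : vec K N -> Prop :=
  fun v => nonzero_vec v /\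
    forall (e : nat) (g : {mpoly K[N.+1]}), g \is e.-homog ->
      (forall s, S s -> g.@[s] = 0) -> g.@[v] = 0.

Definition grad (K : fieldType) (N : nat) (f : {mpoly K[N.+1]}) (p : vec K N)
  : vec K N := fun i => (mderiv i f).@[p].

(* image of the polar map on the points p of a set A where it is defined *)
Definition polar_image_of (K : fieldType) (N : nat) (f : {mpoly K[N.+1]})
  (A : vec K N -> Prop) : vec K N -> Prop :=
  fun w => exists p, A p /\ nonzero_vec p /\ nonzero_vec (grad f p) /\
                     w = grad f p.

Definition polar_image (K : fieldType) (N : nat) (f : {mpoly K[N.+1]}) :=
  proj_closure (polar_image_of f (fun _ => True)).

Definition hypersurface (K : fieldType) (N : nat) (f : {mpoly K[N.+1]}) :=
  fun p : vec K N => nonzero_vec p /\ f.@[p] = 0.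

Definition dual_variety (K : fieldType) (N : nat) (f : {mpoly K[N.+1]}) :=
  proj_closure (polar_image_of f (hypersurface f)).

Definition proj_space (K : fieldType) (N : nat) : vec K N -> Prop :=
  fun v => nonzero_vec v.

Definition mirreducible (K : fieldType) (n : nat) (g : {mpoly K[n]}) : Prop :=
  (1 < msize g)%N /\
  forall a b : {mpoly K[n]}, g = a * b -> (msize a <= 1)%N \/ (msize b <= 1)%N.

Definition no_multiple_factors (K : fieldType) (n : nat) (f : {mpoly K[n]}) :=
  forall g : {mpoly K[n]}, mirreducible g -> ~ exists h, f = g * g * h.

Definition hessian (K : fieldType) (N : nat) (f : {mpoly K[N.+1]})
  : {mpoly K[N.+1]} :=
  \det (\matrix_(i < N.+1, j < N.+1) mderiv i (mderiv j f)).

Definition strict_subset (T : Type) (A B : T -> Prop) : Prop :=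
  (forall x, A x -> B x) /\ exists x, B x /\ ~ A x.

(* Write f_0, ..., f_N for the partial derivatives of f; they are homogeneous of
   degree d - 1.  Closed subsets of (P^N)^* are cut out by homogeneous polynomials, so
   Z_X is proper as soon as some nonzero homogeneous G has G(f_0, ..., f_N) = 0, and
   X^* is a proper subset of Z_X as soon as some homogeneous g has g(f_0, ..., f_N)
   nonzero but divisible by f.

   In characteristic 0 algebraic dependence over K is detected by derivations of K(x):
   a family t is algebraically independent over K iff for each member u some derivation
   kills the other members but not u (extend t to a transcendence basis with the
   variables and kill all of it but u; n + 1 polynomials in n variables are dependent
   by a dimension count).  A vanishing hessian gives a nonzero derivation
   D = sum_k a_k d/dx_k killing every f_i, so the f_i are dependent, which yields G.
   By Euler's formula (d - 1) D f = sum_i x_i D f_i, every derivation killing the f_i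
   kills f, so f is algebraic over K[f_0, ..., f_N]; the lowest nonzero coefficient of
   an equation of f is g(f_0, ..., f_N) with g as required. *)

From HB Require Import structures.
From mathcomp Require Import all_boot all_order all_algebra.
From mathcomp Require Import mpoly ring.
From Stdlib Require Import Classical.
Set Implicit Arguments. Unset Strict Implicit. Unset Printing Implicit Defensive.
Import GRing.Theory.
Local Open Scope ring_scope.

Local Notation "p \mPo t" := (comp_mpoly t p).

(** * Substitution in multivariate polynomials *)

Section MPolyGenerators.
Variables (R : nzRingType) (m : nat).

Lemma mpoly_gen_ind (P : {mpoly R[m]} -> Prop) :
  (forall c, P c%:MP) -> (forall i, P 'X_i) ->
  (forall p q, P p -> P q -> P (p + q)) ->
  (forall p q, P p -> P q -> P (p * q)) -> forall p, P p.
Proof.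
move=> PC PX PD PM; elim/mpolyind=> [|c mu p _ _ Pp]; first by rewrite -mpolyC0.
apply: (PD) => //; rewrite -mul_mpolyC mpolyXE_id; apply: (PM) => //.
apply: (big_ind P); [by rewrite -mpolyC1 | exact: PM | move=> i _].
by elim: (mu i) => [|k IHk]; rewrite ?expr0 -?mpolyC1 // exprS; apply: PM.
Qed.

End MPolyGenerators.

Section MPolyMorphism.
Variables (R S : comNzRingType) (f : {rmorphism R -> S}).

Lemma mmapXU n (h : 'I_n -> S) i : mmap f h 'X_i = h i.
Proof. by rewrite mmapX mmap1U. Qed.

Lemma eq_mmap n (h1 h2 : 'I_n -> S) : h1 =1 h2 -> mmap f h1 =1 mmap f h2.
Proof. by move=> eh p; apply: eq_bigr => mu _; rewrite (mmap1_eq _ eh). Qed.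

End MPolyMorphism.

(* The library's [muni] singles out the last variable; here it is the first one. *)
Section FirstVariable.
Variables (R : comNzRingType) (m : nat).

Definition muni0 : {mpoly R[m.+1]} -> {poly {mpoly R[m]}} :=
  mmap (polyC \o @mpolyC m R)
    (fun i => if unlift ord0 i is Some j then ('X_j)%:P else 'X).

HB.instance Definition _ := GRing.RMorphism.on muni0.

Lemma mmap_muni0 (S : comNzRingType) (f : {rmorphism R -> S}) (h : 'I_m.+1 -> S) p :
  mmap f h p = (map_poly (mmap f (h \o lift ord0)) (muni0 p)).[h ord0].
Proof.
elim/mpoly_gen_ind: p => [c|i|p q IHp IHq|p q IHp IHq].
- by rewrite /muni0 !mmapC /= map_polyC hornerC /= mmapC.
- rewrite /muni0 !mmapXU; case: (unliftP ord0 i) => [j ->|->].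
    by rewrite map_polyC hornerC /= mmapXU.
  by rewrite map_polyX hornerX.
- by rewrite !rmorphD /= hornerD IHp IHq.
- by rewrite !rmorphM /= hornerM IHp IHq.
Qed.

Lemma muni0_eq0 p : (muni0 p == 0) = (p == 0).
Proof.
apply/eqP/eqP => [p0|->]; last exact: rmorph0.
have idX : mmap (@mpolyC _ R) (fun i => 'X_i) p = p.
  by rewrite -[RHS]comp_mpoly_id; apply: eq_mmap => i; rewrite tnth_mktuple.
by rewrite -idX mmap_muni0 p0 rmorph0 horner0.
Qed.

End FirstVariable.

Lemma pchar_mpoly (R : nzRingType) n : [pchar {mpoly R[n]}] =i [pchar R].
Proof. by move=> p; rewrite !inE -mpolyC_nat mpolyC_eq0. Qed.

Lemma size_deriv_pchar0 (R : idomainType) (p : {poly R}) :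
  [pchar R] =i pred0 -> size p^`() = (size p).-1.
Proof.
move=> /pcharf0P charR; have [le_p1|lt_1p] := leqP (size p) 1.
  by rewrite {1}[p]size1_polyC // derivC size_poly0 -subn1 (eqnP le_p1).
have e : (size p).-2.+1 = (size p).-1 by case: (size p) lt_1p => [|[|]].
rewrite size_poly_eq // -mulr_natr e mulf_neq0 ?charR //.
  by rewrite -lead_coefE lead_coef_eq0 -size_poly_eq0 -lt0n ltnW.
by case: (size p) lt_1p => [|[|]].
Qed.

Lemma exists_coef_dvd_root (R : idomainType) (Q : {poly R}) u :
  Q != 0 -> u != 0 -> root Q u -> exists2 i, Q`_i != 0 & exists r, Q`_i = u * r.
Proof.
elim/poly_ind: Q => [|Q c IH]; first by rewrite eqxx.
move=> Qn0 un0 /rootP; rewrite hornerMXaddC.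
have [c0 Qu|cn0 Qu] := eqVneq c 0.
  move: Qn0 Qu; rewrite c0 polyC0 !addr0 mulf_eq0 polyX_eq0 orbF => Qn0 /eqP.
  rewrite mulf_eq0 (negbTE un0) orbF => Qu0.
  have [i Qi dvd_Qi] := IH Qn0 un0 Qu0.
  by exists i.+1; rewrite coefMX.
exists 0%N; rewrite coefD coefMX coefC add0r //.
by exists (- Q.[u]); apply/eqP; rewrite mulrN -addr_eq0 addrC mulrC Qu.
Qed.

Lemma exists_kernel_rV (F : fieldType) p q (M : 'M[F]_(p, q)) :
  (q < p)%N -> exists2 v : 'rV_p, v != 0 & v *m M = 0.
Proof.
move=> lt_qp; have : kermx M != 0.
  by rewrite -mxrank_eq0 mxrank_ker subn_eq0 -ltnNge (leq_ltn_trans (rank_leq_col M)).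
by case/rowV0Pn => v /sub_kermxP vM vn0; exists v.
Qed.

Lemma leq_expn2r e m1 m2 : (m1 <= m2)%N -> (m1 ^ e <= m2 ^ e)%N.
Proof. by move=> le_m12; elim: e => // e IHe; rewrite !expnS leq_mul. Qed.

Section TotalDegree.
Variables (R : nzRingType) (n : nat).
Implicit Types (p q : {mpoly R[n]}).

Definition mdeg_le D p := forall mu, mu \in msupp p -> (mdeg mu <= D)%N.

Lemma mdeg_le_msize p : mdeg_le (msize p) p.
Proof. by move=> mu /msize_mdeg_lt /ltnW. Qed.

Lemma mdeg_le_trans D D' p : (D <= D')%N -> mdeg_le D p -> mdeg_le D' p.
Proof. by move=> le_DD' p_le mu /p_le /leq_trans; apply. Qed.

Lemma mdeg_le1 : mdeg_le 0 (1 : {mpoly R[n]}).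
Proof. by move=> mu; rewrite -mpolyC1 msupp1 inE => /eqP ->; rewrite mdeg0. Qed.

Lemma mdeg_leM D1 D2 p q :
  mdeg_le D1 p -> mdeg_le D2 q -> mdeg_le (D1 + D2) (p * q).
Proof.
move=> p_le q_le mu /msuppM_le /allpairsP [[mu1 mu2] /= [mu1p mu2q ->]].
by rewrite mdegD leq_add ?p_le ?q_le.
Qed.

Lemma mdeg_leX D p k : mdeg_le D p -> mdeg_le (k * D) (p ^+ k).
Proof.
move=> p_le; elim: k => [|k IHk]; first by rewrite expr0 mul0n; exact: mdeg_le1.
by rewrite exprS mulSn; apply: mdeg_leM.
Qed.

End TotalDegree.

(** * Algebraic dependence over K *)

Section AlgebraicDependence.
Variables (K : fieldType) (n : nat).
Local Notation A := {mpoly K[n]}.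
Implicit Types (m : nat) (u : A).

Definition alg_indep m (t : m.-tuple A) :=
  forall P : {mpoly K[m]}, P \mPo t = 0 -> P = 0.

Definition in_subalg m (t : m.-tuple A) (a : A) := exists P : {mpoly K[m]}, a = P \mPo t.

Definition alg_over m (t : m.-tuple A) u :=
  exists2 Q : {poly A}, Q != 0 & (forall i, in_subalg t Q`_i) /\ root Q u.

Lemma exists_alg_relation m (t : m.-tuple A) :
  ~ alg_indep t -> exists2 P, P != 0 & P \mPo t = 0.
Proof.
move=> dep; apply: NNPP => noP; apply: dep => P Pt.
by have [//|Pn0] := eqVneq P 0; case: noP; exists P.
Qed.

Lemma alg_indep_nil : alg_indep ([tuple] : 0.-tuple A).
Proof.
by move=> P; rewrite -[P]mpolyKC comp_mpolyC => /eqP; rewrite mpolyC_eq0 => /eqP ->.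
Qed.

Lemma alg_indep_uniq m (t : m.-tuple A) : alg_indep t -> uniq t.
Proof.
move=> indep; apply: contraT => /(uniqPn 0) [i [j [lt_ij lt_j eq_ij]]].
have lt_i := ltn_trans lt_ij lt_j; rewrite size_tuple in lt_i lt_j.
have := indep ('X_(Ordinal lt_i) - 'X_(Ordinal lt_j)).
rewrite rmorphB /= !comp_mpolyXU eq_ij subrr => /(_ erefl).
move/(congr1 (mcoeff U_(Ordinal lt_i))); rewrite mcoeffB !mcoeffXU mcoeff0 eqxx.
by rewrite -val_eqE /= gtn_eqF // subr0 => /eqP; rewrite oner_eq0.
Qed.

Lemma in_subalg_subset m1 m2 (s : m1.-tuple A) (t : m2.-tuple A) (a : A) :
  {subset s <= t} -> in_subalg s a -> in_subalg t a.
Proof.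
move=> st [P ->].
elim/mpoly_gen_ind: P => [c|i|P Q [P' eP] [Q' eQ]|P Q [P' eP] [Q' eQ]].
- by exists c%:MP; rewrite !comp_mpolyC.
- have /tnthP [j ej] := st _ (mem_tnth i s).
  by exists 'X_j; rewrite !comp_mpolyXU -!tnth_nth ej.
- by exists (P' + Q'); rewrite !rmorphD /= eP eQ.
- by exists (P' * Q'); rewrite !rmorphM /= eP eQ.
Qed.

Lemma alg_over_subset m1 m2 (s : m1.-tuple A) (t : m2.-tuple A) u :
  {subset s <= t} -> alg_over s u -> alg_over t u.
Proof.
move=> st [Q Qn0 [Qs Qu]]; exists Q => //; split=> // i.
exact: in_subalg_subset st (Qs i).
Qed.

Lemma alg_over_mem m (t : m.-tuple A) u : u \in t -> alg_over t u.
Proof.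
case/tnthP=> j ->; exists ('X - (tnth t j)%:P); first by rewrite polyXsubC_eq0.
split; last by rewrite root_XsubC.
have -> : 'X - (tnth t j)%:P = map_poly (comp_mpoly t) ('X - ('X_j)%:P).
  by rewrite rmorphB /= map_polyX map_polyC /= comp_mpolyXU -tnth_nth.
by move=> i; rewrite coef_map; exists ('X - ('X_j)%:P)`_i.
Qed.

Lemma alg_over_of_dep m (t : m.-tuple A) u :
  alg_indep t -> ~ alg_indep [tuple of u :: t] -> alg_over t u.
Proof.
move=> indep /exists_alg_relation [P Pn0 Pu].
have uniPn0 : muni0 P != 0 by rewrite muni0_eq0.
exists (map_poly (comp_mpoly t) (muni0 P)); [|split].
- apply: contra uniPn0 => /eqP Q0; rewrite -lead_coef_eq0; apply/eqP/indep.
  by rewrite lead_coefE -coef_map Q0 coef0.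
- by move=> i; rewrite coef_map; exists (muni0 P)`_i.
- rewrite /root -Pu /comp_mpoly mmap_muni0 tnth0.
  by rewrite (eq_map_poly (eq_mmap _ (tnthS u t))).
Qed.

Lemma alg_over_dvd m (t : m.-tuple A) u : u != 0 -> alg_over t u ->
  exists2 c, in_subalg t c & c != 0 /\ exists r, c = u * r.
Proof.
move=> un0 [Q Qn0 [Qt Qu]].
by have [i Qi dvd_Qi] := exists_coef_dvd_root Qn0 un0 Qu; exists Q`_i.
Qed.

Lemma mdeg_le_comp_mpolyX m (t : m.-tuple A) e (mu : 'X_{1..m}) :
  (forall i, mdeg_le e (tnth t i)) -> mdeg_le (mdeg mu * e) ('X_[mu] \mPo t).
Proof.
move=> t_le; rewrite comp_mpolyX mdegE big_distrl /=.
apply: (big_ind2 (fun D p => mdeg_le D p)); first exact: mdeg_le1.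
  by move=> D1 p D2 q; apply: mdeg_leM.
by move=> i _; apply: mdeg_leX.
Qed.

Lemma alg_dep_of_box m (t : m.-tuple A) k B : (B ^ n < k ^ m)%N ->
  (forall (f : {ffun 'I_m -> 'I_k}) nu,
     nu \in msupp ('X_[[multinom (f i : nat) | i < m]] \mPo t) ->
     forall i, (nu i < B)%N) ->
  ~ alg_indep t.
Proof.
move=> card_lt box indep.
pose SI := {ffun 'I_m -> 'I_k}; pose TI := {ffun 'I_n -> 'I_B}.
pose ms (f : SI) : 'X_{1..m} := [multinom (f i : nat) | i < m].
pose mt (g : TI) : 'X_{1..n} := [multinom (g i : nat) | i < n].
have ms_inj : injective ms.
  move=> f1 f2 /mnmP e12; apply/ffunP => i; apply/val_inj.
  by have := e12 i; rewrite !mnmE.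
pose M := \matrix_(a < #|SI|, b < #|TI|)
  ('X_[ms (enum_val a)] \mPo t)@_(mt (enum_val b)).
have [v vn0 vM] : exists2 v : 'rV_#|SI|, v != 0 & v *m M = 0.
  by apply: exists_kernel_rV; rewrite !card_ffun !card_ord.
pose P := \sum_a v 0 a *: 'X_[ms (enum_val a)].
have coefP a : P@_(ms (enum_val a)) = v 0 a.
  rewrite raddf_sum (bigD1 a) //= big1 ?addr0 => [|a' ne_a'a].
    by rewrite mcoeffZ mcoeffX eqxx mulr1.
  by rewrite mcoeffZ mcoeffX (inj_eq ms_inj) (inj_eq enum_val_inj) (negbTE ne_a'a) mulr0.
have /indep P0 : P \mPo t = 0.
  apply/mpolyP => nu; rewrite mcoeff0 rmorph_sum raddf_sum /=.
  under eq_bigr do rewrite comp_mpolyZ mcoeffZ.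
  have [/forallP nu_lt | /forallPn [i nu_ge]] := boolP [forall i, nu i < B]%N.
    pose g : TI := [ffun i => Ordinal (nu_lt i)].
    have -> : nu = mt g by apply/mnmP => i; rewrite mnmE ffunE.
    have := congr1 (fun w : 'rV_#|TI| => w 0 (enum_rank g)) vM.
    rewrite !mxE => vMg; rewrite -[RHS]vMg; apply: eq_bigr => a _.
    by rewrite mxE enum_rankK.
  rewrite big1 // => a _; rewrite memN_msupp_eq0 ?mulr0 //.
  by apply: contra nu_ge => /box; apply.
move/negP: vn0; apply; apply/eqP/rowP => a.
by rewrite mxE -coefP P0 mcoeff0.
Qed.

(* With [c = m e + 1], the [k^m] monomials with exponents [< k = c^n + 1] are
   mapped into polynomials with exponents [< B = m k e + 1], a space of
   dimension [B^n <= (c k)^n < k^m]. *)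
Lemma alg_indep_size m (t : m.-tuple A) : alg_indep t -> (m <= n)%N.
Proof.
rewrite leqNgt => indep; apply/negP => lt_nm.
pose e := \max_(i < m) msize (tnth t i).
have t_le i : mdeg_le e (tnth t i).
  apply: mdeg_le_trans (@leq_bigmax _ (fun i => msize (tnth t i)) i) _.
  exact: mdeg_le_msize.
pose c := (m * e).+1; pose k := (c ^ n).+1; pose B := (m * k * e).+1.
apply: (@alg_dep_of_box m t k B) indep.
  have le_Bck : (B <= c * k)%N.
    by rewrite /B /c mulSn -mulnA [(k * e)%N]mulnC mulnA addnC -addn1 leq_add2l.
  apply: (leq_ltn_trans (leq_expn2r n le_Bck)); rewrite expnMn.
  apply: (@leq_trans (k ^ n.+1)); last exact: leq_pexp2l.
  by rewrite expnS ltn_pmul2r ?expn_gt0.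
move=> f nu nu_in i; have le_nu := @mdeg_le_comp_mpolyX _ t _ _ t_le _ nu_in.
apply: (@leq_trans (mdeg nu).+1); first by rewrite ltnS mdegE (bigD1 i) //= leq_addr.
rewrite ltnS (leq_trans le_nu) // leq_mul2r; apply/orP; right.
rewrite mdegE -[m in (_ <= m * _)%N]card_ord -sum_nat_const.
by apply: leq_sum => j _; rewrite mnmE ltnW.
Qed.

Lemma exists_alg_basis l (b : l.-tuple A) (cands : seq A) : alg_indep b ->
  exists m, exists2 s : m.-tuple A, alg_indep s &
    [/\ {subset b <= s}, {subset s <= b ++ cands} &
        {in cands, forall c, alg_over s c}].
Proof.
elim: cands l b => [|c cands IH] l b indep_b.
  by exists l, b => //; split=> // x; rewrite cats0.
have [indep_cb|dep_cb] := classic (alg_indep [tuple of c :: b]).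
  have [m [s indep_s [sub_cbs sub_s alg_s]]] := IH _ _ indep_cb.
  exists m, s => //; split.
  - by move=> x xb; apply: sub_cbs; rewrite inE xb orbT.
  - move=> x /sub_s; rewrite !mem_cat !inE.
    by case/orP => [/orP [->|->]|->]; rewrite ?orbT.
  - move=> x; rewrite inE => /predU1P [->|/alg_s //].
    by apply/alg_over_mem/sub_cbs; rewrite inE eqxx.
have alg_c := alg_over_of_dep indep_b dep_cb.
have [m [s indep_s [sub_bs sub_s alg_s]]] := IH _ _ indep_b.
exists m, s => //; split=> //.
- by move=> x /sub_s; rewrite !mem_cat inE => /orP [->|->]; rewrite ?orbT.
- by move=> x; rewrite inE => /predU1P [->|/alg_s //]; apply: alg_over_subset alg_c.
Qed.

End AlgebraicDependence.

(** * Derivations *)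

Section PartialDerivatives.
Variables (R : comNzRingType) (n : nat).
Implicit Types (p : {mpoly R[n]}).

Lemma dhomog_mderiv p d i : p \is d.-homog -> p^`M(i) \is d.-1.-homog.
Proof.
move/dhomogP => hp; apply/dhomogP => nu; rewrite mcoeff_msupp mcoeff_mderiv => nz.
have /hp : (nu + U_(i))%MM \in msupp p.
  by rewrite mcoeff_msupp; apply: contra nz => /eqP ->; rewrite mul0rn.
by rewrite /= mdegD mdeg1 addn1 => <-.
Qed.

Lemma mpoly_euler p d : p \is d.-homog -> \sum_i 'X_i * p^`M(i) = p *+ d.
Proof.
move/dhomogP => hp.
have Xderiv i :
    'X_i * p^`M(i) = \sum_(mu <- msupp p) p@_mu *: ((mu i)%:R *: 'X_[mu]).
  rewrite {1}[p]mpolyE (big_morph (mderiv i) (@mderivD _ _ i) (@mderiv0 _ _ i)).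
  rewrite mulr_sumr; apply: eq_bigr => mu _.
  rewrite mderivZ mderivX -!scalerAr; congr (_ *: _).
  have [->|mu_i] := eqVneq (mu i) 0%N; first by rewrite !scale0r.
  by rewrite -mpolyXD addmC submK // lep1mP.
rewrite (eq_bigr _ (fun i _ => Xderiv i)) exchange_big /= [p in RHS]mpolyE -sumrMnl.
rewrite big_seq [RHS]big_seq; apply: eq_bigr => mu /hp.
rewrite -scaler_sumr -scaler_suml -natr_sum -mdegE => ->.
by rewrite -scalerMnl scale1r scalerMnr.
Qed.

Definition partials p : n.-tuple {mpoly R[n]} := [tuple p^`M(i) | i < n].

Lemma dhomog_partials p d i : p \is d.-homog -> tnth (partials p) i \is d.-1.-homog.
Proof. by rewrite tnth_mktuple; apply: dhomog_mderiv. Qed.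

End PartialDerivatives.

Section Derivations.
Variables (K : fieldType) (n : nat).
Local Notation A := {mpoly K[n]}.
Local Notation F := {fraction A}.
Local Notation "x %:F" := (@tofrac _ x).
Implicit Types (a : 'I_n -> F) (p q u : A).

Definition der a p : F := \sum_k a k * (p^`M(k))%:F.

Lemma derD a : {morph der a : p q / p + q}.
Proof.
move=> p q; rewrite /der -big_split; apply: eq_bigr => k _.
by rewrite mderivD rmorphD mulrDr.
Qed.

Lemma derM a p q : der a (p * q) = der a p * q%:F + p%:F * der a q.
Proof.
rewrite /der mulr_suml mulr_sumr -big_split; apply: eq_bigr => k _.
by rewrite mderivM rmorphD !rmorphM /=; ring.
Qed.

Lemma derMn a p k : der a (p *+ k) = der a p *+ k.
Proof.
rewrite /der -sumrMnl; apply: eq_bigr => i _.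
by rewrite mderivMn rmorphMn mulrnAr.
Qed.

Lemma derC a c : der a c%:MP = 0.
Proof. by rewrite /der big1 // => k _; rewrite mderivC rmorph0 mulr0. Qed.

Lemma der0 a : der a 0 = 0.
Proof. by rewrite -mpolyC0 derC. Qed.

Lemma derXU a j : der a 'X_j = a j.
Proof.
rewrite /der (bigD1 j) //= big1 ?addr0 => [|k ne_kj].
  rewrite mderivX mnm1E eqxx.
  have -> : (U_(j) - U_(j) = 0)%MM by apply/mnmP => i; rewrite mnmBE subnn mnm0E.
  by rewrite mpolyX0 scale1r rmorph1 mulr1.
by rewrite mderivX mnm1E eq_sym (negbTE ne_kj) scale0r rmorph0 mulr0.
Qed.

Lemma der_subalg a m (t : m.-tuple A) x :
  (forall y, y \in t -> der a y = 0) -> in_subalg t x -> der a x = 0.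
Proof.
move=> kt [P ->]; elim/mpoly_gen_ind: P => [c|i|P Q kP kQ|P Q kP kQ].
- by rewrite comp_mpolyC derC.
- by rewrite comp_mpolyXU -tnth_nth kt ?mem_tnth.
- by rewrite rmorphD derD kP kQ addr0.
- by rewrite rmorphM derM kP kQ mul0r mulr0 addr0.
Qed.

Lemma der_horner a (Q : {poly A}) u :
  (forall i, der a Q`_i = 0) -> der a Q.[u] = (Q^`().[u])%:F * der a u.
Proof.
elim/poly_ind: Q => [|Q c IH] kQ.
  by rewrite horner0 der0 deriv0 horner0 rmorph0 mul0r.
have kQ' i : der a Q`_i = 0 by have := kQ i.+1; rewrite coefD coefMX coefC addr0.
have kc : der a c = 0 by have := kQ 0%N; rewrite coefD coefMX coefC add0r.
rewrite hornerMXaddC derD kc addr0 derM IH // derivMXaddC.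
by rewrite hornerD hornerM hornerX rmorphD !rmorphM /=; ring.
Qed.

Lemma exists_der_kill (s : seq A) : (size s < n)%N ->
  exists2 a, (exists k, a k != 0) & forall y, y \in s -> der a y = 0.
Proof.
move=> lt_sn; pose M : 'M[F]_(n, size s) := \matrix_(k, i) ((s`_i)^`M(k))%:F.
have [v vn0 vM] := exists_kernel_rV M lt_sn.
exists (v 0); first by have /rV0Pn [k vk] := vn0; exists k.
move=> y ys; rewrite -(nth_index 0 ys).
have := congr1 (fun w : 'rV_(size s) => w 0 (Ordinal (etrans (index_mem y s) ys))) vM.
by rewrite !mxE => <-; apply: eq_bigr => k _; rewrite mxE.
Qed.

Section CharacteristicZero.
Hypothesis charK : [pchar K] =i pred0.

Let charA : [pchar A] =i pred0.
Proof. by move=> p; rewrite pchar_mpoly charK. Qed.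

Lemma der_root a (Q : {poly A}) u :
  (forall i, der a Q`_i = 0) -> Q != 0 -> root Q u -> der a u = 0.
Proof.
have [//|du] := eqVneq (der a u) 0.
elim: {Q}(size Q) {-2}Q (leqnn (size Q)) => [|s IH] Q szQ kQ Qn0 Qu.
  by move: Qn0; rewrite -size_poly_eq0 -leqn0 szQ.
have sizeQ_gt1 : (1 < size Q)%N.
  rewrite ltnNge; apply/negP => /size1_polyC Qc.
  by move: Qu Qn0; rewrite Qc rootC polyC_eq0 => ->.
have size_Q' := size_deriv_pchar0 Q charA.
apply: (IH Q^`()).
- by rewrite size_Q' -ltnS prednK // ltnW.
- by move=> i; rewrite coef_deriv derMn kQ mul0rn.
- by rewrite -size_poly_eq0 size_Q' -subn1 subn_eq0 -ltnNge.
- move/rootP: Qu => /(congr1 (der a)); rewrite der_horner // der0 => /eqP.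
  by rewrite mulf_eq0 (negbTE du) orbF -(rmorph0 (@tofrac _)) tofrac_eq.
Qed.

Lemma der_alg_over a m (t : m.-tuple A) u :
  (forall y, y \in t -> der a y = 0) -> alg_over t u -> der a u = 0.
Proof.
by move=> kt [Q Qn0 [Qt Qu]]; apply: der_root Qn0 Qu => i; apply: der_subalg kt _.
Qed.

Lemma der_dhomog a p d : p \is d.-homog -> (1 < d)%N ->
  (forall i, der a p^`M(i) = 0) -> der a p = 0.
Proof.
move=> hp d_gt1 kp.
have : der a p *+ d.-1 = \sum_i ('X_i)%:F * der a p^`M(i).
  rewrite /der -sumrMnl.
  under eq_bigr => k _ do rewrite -mulrnAr -rmorphMn -(mpoly_euler (dhomog_mderiv k hp)).
  under eq_bigr => k _ do rewrite rmorph_sum mulr_sumr.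
  rewrite exchange_big /=; apply: eq_bigr => i _; rewrite mulr_sumr.
  by apply: eq_bigr => k _; rewrite rmorphM mderiv_comm /=; ring.
rewrite big1 => [|i _]; last by rewrite kp mulr0.
move/eqP; rewrite -mulr_natr mulf_eq0 => /orP [/eqP //|].
rewrite -(rmorph_nat (@tofrac _)) -(rmorph0 (@tofrac _)) tofrac_eq.
by move/pcharf0P: charA => ->; rewrite -subn1 subn_eq0 leqNgt d_gt1.
Qed.

(* Extend [u :: t] to a transcendence basis [s] using the variables; a nonzero
   derivation killing the [< n] elements of [s] other than [u] cannot kill [u]. *)
Lemma der_separates m (t : m.-tuple A) u : alg_indep [tuple of u :: t] ->
  exists a, (forall y, y \in t -> der a y = 0) /\ der a u != 0.
Proof.
move=> indep_ut.
have [k [s indep_s [sub_uts _ alg_X]]] :=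
  exists_alg_basis [seq 'X_j | j <- enum 'I_n] indep_ut.
have u_s : u \in s by apply: sub_uts; rewrite inE eqxx.
have /andP [u_t _] := alg_indep_uniq indep_ut.
have mem_rem_s := mem_rem_uniq u (alg_indep_uniq indep_s).
have size_rem : (size (rem u s) < n)%N.
  rewrite size_rem // size_tuple prednK ?(alg_indep_size indep_s) //.
  by case: k s u_s {indep_s sub_uts alg_X mem_rem_s} => [[[]]|].
have [a [j aj] ka] := exists_der_kill size_rem.
exists a; split.
  move=> y yt; apply: ka; rewrite mem_rem_s inE sub_uts ?inE ?yt ?orbT // andbT.
  by apply: contraNneq u_t => <-.
apply: contra aj => /eqP du; rewrite -derXU; apply/eqP.
apply: (der_alg_over _ (alg_X 'X_j _)).
  move=> y ys; have [->|ne_yu] := eqVneq y u => //.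
  by apply: ka; rewrite mem_rem_s inE ne_yu.
by apply/mapP; exists j; rewrite ?mem_enum.
Qed.

Lemma alg_over_of_der m (t : m.-tuple A) u : alg_indep t ->
  (forall a, (forall y, y \in t -> der a y = 0) -> der a u = 0) -> alg_over t u.
Proof.
move=> indep_t kill_u; apply: alg_over_of_dep indep_t _ => indep_ut.
by have [a [kt /eqP]] := der_separates indep_ut; apply; apply: kill_u.
Qed.

Lemma partials_alg_dep p :
  \det (\matrix_(i, j) mderiv i (mderiv j p)) = 0 -> ~ alg_indep (partials p).
Proof.
move=> hess indep.
have /det0P [v vn0 vH] :
    \det (map_mx (@tofrac _) (\matrix_(i, j) mderiv i (mderiv j p))) == 0.
  by rewrite det_map_mx hess rmorph0.
have kill_partials y : y \in partials p -> der (v 0) y = 0.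
  case/tnthP => j ->; rewrite tnth_mktuple.
  have := congr1 (fun w : 'rV_n => w 0 j) vH; rewrite !mxE => <-.
  by apply: eq_bigr => k _; rewrite !mxE.
have alg_X k : alg_over (partials p) 'X_k.
  by apply: alg_over_of_dep indep _ => /alg_indep_size; rewrite ltnn.
move/eqP: vn0; apply; apply/rowP => k; rewrite !mxE -derXU.
exact: (der_alg_over kill_partials (alg_X k)).
Qed.

Lemma partials_alg_over p d : p \is d.-homog -> (1 < d)%N -> alg_over (partials p) p.
Proof.
move=> hp d_gt1.
have [m [s indep_s [_ sub_s alg_s]]] :=
  exists_alg_basis (partials p) (@alg_indep_nil K n).
have sub_s' : {subset s <= partials p} by move=> x /sub_s.
apply: (alg_over_subset sub_s'); apply: (alg_over_of_der indep_s) => a ks.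
apply: (der_dhomog hp d_gt1) => i; apply: (der_alg_over ks (alg_s _ _)).
by apply/tnthP; exists i; rewrite tnth_mktuple.
Qed.

End CharacteristicZero.

End Derivations.

(** * Homogeneous components *)

Lemma pihomog_dhomogM (K : fieldType) n (f r : {mpoly K[n]}) d D :
  f \is d.-homog -> exists r', pihomog mdeg D (f * r) = f * r'.
Proof.
move=> hf; elim/mpolyind: r => [|c mu r _ _ [r' IH]].
  by exists 0; rewrite mulr0 raddf0.
exists ((if (d + mdeg mu == D)%N then c *: 'X_[mu] else 0) + r').
rewrite !mulrDr raddfD /= IH -scalerAr linearZ /=; congr (_ + _).
have hfX : f * 'X_[mu] \is (d + mdeg mu).-homog by rewrite dhomogM ?dhomogX.
case: eqP => [<-|ne]; first by rewrite pihomog_dE // scalerAr.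
by rewrite (pihomog_ne0 _ hfX) ?scaler0 ?mulr0 //; apply/eqP.
Qed.

Section HomogeneousComponents.
Variables (K : fieldType) (n m e : nat) (t : m.-tuple {mpoly K[n]}).
Hypothesis t_homog : forall i, tnth t i \is e.-homog.

Lemma dhomog_comp_mpolyX mu : 'X_[mu] \mPo t \is (mdeg mu * e).-homog.
Proof.
rewrite comp_mpolyX mdegE big_distrl /=.
apply: (big_ind2 (fun d (p : {mpoly K[n]}) => p \is d.-homog)).
- exact: dhomog1.
- by move=> d1 p d2 q; apply: dhomogM.
- by move=> i _; rewrite mulnC; apply: dhomogMn.
Qed.

Hypothesis e_gt0 : (0 < e)%N.

Lemma pihomog_comp_mpoly k P :
  pihomog mdeg (k * e) (P \mPo t) = pihomog mdeg k P \mPo t.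
Proof.
elim/mpolyind: P => [|c mu P _ _ IH]; first by rewrite !raddf0.
rewrite !linearP /= IH; congr (c *: _ + _).
have [<-|ne] := eqVneq (mdeg mu) k.
  by rewrite !pihomog_dE ?dhomog_comp_mpolyX ?dhomogX.
rewrite (pihomog_ne0 ne) ?dhomogX // raddf0.
by rewrite (pihomog_ne0 _ (dhomog_comp_mpolyX mu)) // eqn_pmul2r.
Qed.

Lemma exists_dhomog_relation P : P != 0 -> P \mPo t = 0 ->
  exists k (G : {mpoly K[m]}), [/\ G \is k.-homog, G != 0 & G \mPo t = 0].
Proof.
move=> Pn0 Pt.
have /existsP [k Pk] : [exists k : 'I_(msize P), pihomog mdeg k P != 0].
  apply: contraR Pn0 => /existsPn none.
  rewrite [P in P == 0](@pihomog_partitionE _ _ mdeg _ _ (leqnn (msize P))) big1 //.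
  by move=> k _; apply/eqP/negbNE/none.
exists k, (pihomog mdeg k P); split=> //; first exact: pihomogP.
by rewrite -pihomog_comp_mpoly Pt raddf0.
Qed.

Lemma exists_dhomog_multiple (f : {mpoly K[n]}) d P r :
  f \is d.-homog -> P \mPo t != 0 -> P \mPo t = f * r ->
  exists k (G : {mpoly K[m]}),
    [/\ G \is k.-homog, G \mPo t != 0 & exists r', G \mPo t = f * r'].
Proof.
move=> hf Ptn0 Pt.
have /existsP [k Pk] : [exists k : 'I_(msize P), pihomog mdeg k P \mPo t != 0].
  apply: contraR Ptn0 => /existsPn none.
  rewrite [P in P \mPo t](@pihomog_partitionE _ _ mdeg _ _ (leqnn (msize P))).
  rewrite rmorph_sum big1 //.
  by move=> k _; apply/eqP/negbNE/none.
exists k, (pihomog mdeg k P); split=> //; first exact: pihomogP.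
by rewrite -pihomog_comp_mpoly Pt; apply: pihomog_dhomogM hf.
Qed.

End HomogeneousComponents.

(** * The polar image and the dual variety *)

Section ProjectiveClosure.
Variables (K : fieldType) (N : nat).
Implicit Types (S T : vec K N -> Prop) (v : vec K N).

Lemma proj_closure_mono S T v :
  (forall s, S s -> T s) -> proj_closure S v -> proj_closure T v.
Proof. by move=> ST [nv clv]; split=> // e g hg gT; apply: clv hg _ => s /ST /gT. Qed.

Lemma proj_closure_sub S v : nonzero_vec v -> S v -> proj_closure S v.
Proof. by move=> nv Sv; split=> // e g _; apply. Qed.

Lemma notin_proj_closure S e (g : {mpoly K[N.+1]}) v : g \is e.-homog ->
  (forall s, S s -> g.@[s] = 0) -> g.@[v] != 0 -> ~ proj_closure S v.
Proof. by move=> hg gS /eqP gv [_ clv]; apply/gv/(clv _ _ hg). Qed.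

End ProjectiveClosure.

Section ClosedField.
Variable K : closedFieldType.

Lemma exists_mpoly_nonroot m (P : {mpoly K[m]}) : P != 0 -> exists v, P.@[v] != 0.
Proof.
elim: m P => [|m IH] P Pn0.
  by exists (fun _ => 0); move: Pn0; rewrite -[P]mpolyKC mevalC mpolyC_eq0.
have [v lv] : exists v, (lead_coef (muni0 P)).@[v] != 0.
  by apply: IH; rewrite lead_coef_eq0 muni0_eq0.
have /closed_nonrootP [x Qx] : map_poly (meval v) (muni0 P) != 0.
  by apply: contra lv => /eqP Q0; rewrite lead_coefE -coef_map Q0 coef0.
exists (fun i => if unlift ord0 i is Some j then v j else x).
rewrite /meval mmap_muni0 /= unlift_none.
rewrite (@eq_map_poly _ _ _ (meval v)) //.
by apply: eq_mmap => j /=; rewrite liftK.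
Qed.

Lemma exists_nonzero_nonroot N (P : {mpoly K[N.+1]}) : P != 0 ->
  exists v, nonzero_vec v /\ P.@[v] != 0.
Proof.
move=> Pn0; have X0n0 : 'X_ord0 != 0 :> {mpoly K[N.+1]}.
  by rewrite -(mmeasure_poly_eq0 mdeg) msizeX.
have [v] := exists_mpoly_nonroot (mulf_neq0 Pn0 X0n0).
rewrite mevalM mevalXU mulf_eq0 negb_or => /andP [Pv v0].
by exists v; split=> //; exists ord0.
Qed.

End ClosedField.

Section PolarMap.
Variables (K : fieldType) (N : nat) (f : {mpoly K[N.+1]}).

Lemma meval_partials (P : {mpoly K[N.+1]}) p : (P \mPo partials f).@[p] = P.@[grad f p].
Proof. by rewrite comp_mpoly_meval; apply: meval_eq => i; rewrite tnth_mktuple. Qed.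

Lemma grad_eq0_root d p : [pchar K] =i pred0 -> f \is d.-homog -> (0 < d)%N ->
  ~ nonzero_vec (grad f p) -> f.@[p] = 0.
Proof.
move=> charK hf d_gt0 g0.
have {}g0 i : (f^`M(i)).@[p] = 0 by apply/eqP/negPn/negP => gi; apply: g0; exists i.
have := congr1 (meval p) (mpoly_euler hf).
rewrite rmorph_sum big1 => [|i _]; last by rewrite /= mevalM g0 mulr0.
rewrite mevalMn => /esym/eqP; rewrite -mulr_natr mulf_eq0 => /orP [/eqP //|].
by move/pcharf0P: charK => ->; rewrite eqn0Ngt d_gt0.
Qed.

End PolarMap.

Section StrictInclusions.
Variables (K : closedFieldType) (N : nat) (f : {mpoly K[N.+1]}).

Lemma polar_image_strict k (G : {mpoly K[N.+1]}) :
  G \is k.-homog -> G != 0 -> G \mPo partials f = 0 ->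
  strict_subset (polar_image f) (@proj_space K N).
Proof.
move=> hG Gn0 Gf; split=> [v []//|].
have [v [nv Gv]] := exists_nonzero_nonroot Gn0.
exists v; split=> //; apply: notin_proj_closure hG _ Gv.
by move=> _ [p [_ [_ [_ ->]]]]; rewrite -meval_partials Gf meval0.
Qed.

Lemma dual_variety_strict d k (G r : {mpoly K[N.+1]}) :
  [pchar K] =i pred0 -> f \is d.-homog -> (0 < d)%N -> G \is k.-homog ->
  G \mPo partials f != 0 -> G \mPo partials f = f * r ->
  strict_subset (dual_variety f) (polar_image f).
Proof.
move=> charK hf d_gt0 hG Gfn0 Gf; split.
  by move=> v; apply: proj_closure_mono => s [p [_ rest]]; exists p.
have [p [np Gp]] := exists_nonzero_nonroot Gfn0.
have ng : nonzero_vec (grad f p).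
  apply: NNPP => /(grad_eq0_root charK hf d_gt0) fp.
  by move: Gp; rewrite Gf mevalM fp mul0r eqxx.
exists (grad f p); split; first by apply: proj_closure_sub => //; exists p.
apply: notin_proj_closure hG _ _; last by rewrite -meval_partials.
by move=> _ [q [[_ fq] [_ [_ ->]]]]; rewrite -meval_partials Gf mevalM fq mul0r.
Qed.

End StrictInclusions.

Unset Implicit Arguments.

Theorem corollary1p2 (K : closedFieldType) (N d : nat) (f : {mpoly K[N.+1]}) :
  [pchar K] =i pred0 ->
  (1 <= N)%N ->
  (2 <= d)%N ->
  f != 0 -> f \is d.-homog ->
  no_multiple_factors f ->
  hessian f = 0 ->
  strict_subset (dual_variety f) (polar_image f) /\
  strict_subset (polar_image f) (@proj_space K N).
Proof.
move=> charK _ d_ge2 fn0 hf _ hess.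
have d1_gt0 : (0 < d.-1)%N by rewrite -subn1 subn_gt0.
have partials_homog i := dhomog_partials i hf.
split.
  have [_ [P ->] [Pn0 [r Pf]]] := alg_over_dvd fn0 (partials_alg_over charK hf d_ge2).
  have [k [G [hG Gn0 [r' Gf]]]] := exists_dhomog_multiple partials_homog d1_gt0 hf Pn0 Pf.
  exact: dual_variety_strict charK hf (ltnW d_ge2) hG Gn0 Gf.
have [P Pn0 Pf] := exists_alg_relation (partials_alg_dep charK hess).
have [k [G [hG Gn0 Gf]]] := exists_dhomog_relation partials_homog d1_gt0 Pn0 Pf.
exact: polar_image_strict hG Gn0 Gf.
Qed.
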